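(* Let $X_1,\dots,X_n$ be real numbers (or random variables), $\epsilon\in(0,1/2)$, and let $X_1^\epsilon,\dots,X_n^\epsilon$ satisfy $\#\{i\in[n]:X_i^\epsilon\neq X_i\}\leq\epsilon n$. Let $k_1,k_2\in\mathbb{N}$ satisfy $\min\{k_1,k_2\}\geq\lfloor\epsilon n\rfloor$ and $k_1+k_2<n$. Then \[\overline{X}_{n,k_1-\lfloor\epsilon n\rfloor,\,k_2+\lfloor\epsilon n\rfloor}\leq\overline{X^\epsilon}_{n,k_1,k_2}\leq\overline{X}_{n,k_1+\lfloor\epsilon n\rfloor,\,k_2-\lfloor\epsilon n\rfloor}.\]
   Context: For integers $k_1,k_2\geq0$ with $k_1+k_2<n$ and order statistics $X_{(1)}\le\dots\le X_{(n)}$, the $(k_1,k_2)$-trimmed mean is $\overline{X}_{n,k_1,k_2}:=\frac{1}{n-k_1-k_2}\sum_{i=k_1+1}^{n-k_2}X_{(i)}$; $\overline{X^\epsilon}_{n,k_1,k_2}$ is defined in the same way from the order statistics $X^\epsilon_{(1)}\le\dots\le X^\epsilon_{(n)}$ of $X^\epsilon_1,\dots,X^\epsilon_n$. *)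

From mathcomp Require Import all_boot all_order all_algebra.
Set Implicit Arguments. Unset Strict Implicit. Unset Printing Implicit Defensive.
Import Order.TTheory GRing.Theory Num.Theory.
Local Open Scope ring_scope.

(* Order statistics X_(1) <= ... <= X_(n), stored 0-based:
   X_(i) = nth 0 (order_stats X) (i-1). *)
Definition order_stats (R : realFieldType) (n : nat) (X : 'I_n -> R) : seq R :=
  sort <=%R [seq X i | i <- enum 'I_n].

Definition trimmed_mean (R : realFieldType) (n k1 k2 : nat) (X : 'I_n -> R) : R :=
  ((n - k1 - k2)%N%:R)^-1 *
    \sum_(k1 <= i < n - k2) nth 0 (order_stats X) i.

From mathcomp Require Import all_boot all_order all_algebra.
From mathcomp Require Import zify.
Set Implicit Arguments. Unset Strict Implicit. Unset Printing Implicit Defensive.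
Import Order.TTheory GRing.Theory Num.Theory.
Local Open Scope ring_scope.

(* Changing at most m of the X_i moves each order statistic by at most m
   ranks: at most i of the Xe_j lie strictly below Xe_(i), so at most i + m
   of the X_j do, whence Xe_(i) <= X_(i+m).  Summing this over the trimmed
   window gives the upper bound; swapping the roles of X and Xe gives the
   lower one. *)

Section SortedNth.
Context {disp : Order.disp_t} {T : orderType disp} (x0 : T).
Implicit Types (s : seq T) (v : T).

Lemma count_lt_nth_sorted s i : sorted <=%O s -> (i < size s)%N ->
  (count (< nth x0 s i)%O s <= i)%N.
Proof.
move=> s_sorted i_lt; set t := nth x0 s i.
rewrite -(cat_take_drop i s) count_cat.
have -> : count (< t)%O (drop i s) = 0%N.
  apply/eqP; rewrite -leqn0 leqNgt -has_count; apply/hasPn => y /(nthP x0) [j j_lt <-].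
  rewrite size_drop in j_lt; rewrite nth_drop /= -leNgt.
  by apply: le_sorted_leq_nth; rewrite ?inE ?leq_addr -?ltn_subRL.
by rewrite addn0 (leq_trans (count_size _ _)) // size_take i_lt.
Qed.

Lemma le_nth_sorted s j v : sorted <=%O s -> (j < size s)%N ->
  (count (< v)%O s <= j)%N -> (v <= nth x0 s j)%O.
Proof.
move=> s_sorted j_lt count_le; rewrite leNgt; apply/negP => nth_lt.
have prefix_lt : count (< v)%O (take j.+1 s) = j.+1.
  rewrite -[RHS](size_takel j_lt); apply/eqP; rewrite -all_count.
  apply/allP => y /(nthP x0) [k]; rewrite size_takel // => k_lt <-.
  rewrite /= nth_take //; apply: le_lt_trans nth_lt.
  by apply: le_sorted_leq_nth; rewrite ?inE // (leq_trans k_lt).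
move: count_le; rewrite -(cat_take_drop j.+1 s) count_cat prefix_lt; lia.
Qed.

End SortedNth.

Section OrderStats.
Variable R : realFieldType.
Implicit Types (n : nat).

Lemma size_order_stats n (X : 'I_n -> R) : size (order_stats X) = n.
Proof. by rewrite size_sort size_map size_enum_ord. Qed.

Lemma order_stats_sorted n (X : 'I_n -> R) : sorted <=%O (order_stats X).
Proof. exact: (sort_sorted (@le_total _ R)). Qed.

Lemma count_order_stats n (X : 'I_n -> R) (p : pred R) :
  count p (order_stats X) = #|[set k | p (X k)]|.
Proof. by rewrite count_sort count_map cardsE cardE size_filter enumT. Qed.

Lemma order_stats_le_shift n (X Xe : 'I_n -> R) m i :
  (#|[set k | Xe k != X k]| <= m)%N -> (i + m < n)%N ->
  nth 0 (order_stats Xe) i <= nth 0 (order_stats X) (i + m).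
Proof.
move=> card_diff im_lt; set v := nth 0 (order_stats Xe) i.
have below_Xe : (#|[set k | (Xe k < v)%R]| <= i)%N.
  rewrite -(count_order_stats Xe (< v)%O) count_lt_nth_sorted //.
    exact: order_stats_sorted.
  by rewrite size_order_stats; lia.
have below_X :
    [set k | (X k < v)%R] \subset [set k | (Xe k < v)%R] :|: [set k | Xe k != X k].
  apply/subsetP => k; rewrite !inE.
  by case: (eqVneq (Xe k) (X k)) => [-> -> | _ _]; rewrite ?orbT.
apply: le_nth_sorted; rewrite ?size_order_stats ?count_order_stats //.
  exact: order_stats_sorted.
rewrite (leq_trans (subset_leq_card below_X)) // (leq_trans (leq_card_setU _ _)) //.
lia.
Qed.

Lemma trimmed_mean_le_shift n (X Xe : 'I_n -> R) m k1 k2 :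
  (#|[set k | Xe k != X k]| <= m)%N -> (m <= k2)%N ->
  trimmed_mean k1 k2 Xe <= trimmed_mean (k1 + m) (k2 - m) X.
Proof.
move=> card_diff m_le_k2; rewrite /trimmed_mean.
have -> : (n - (k1 + m) - (k2 - m) = n - k1 - k2)%N by lia.
apply: ler_wpM2l; first by rewrite invr_ge0 ler0n.
rewrite big_addn (_ : n - (k2 - m) - m = n - k2)%N; last by lia.
apply: ler_sum_nat => i /andP[_ i_lt]; apply: order_stats_le_shift => //; lia.
Qed.

End OrderStats.

Theorem proposition3p6 (R : archiRealFieldType) (n : nat) (X Xe : 'I_n -> R)
  (eps : R) (k1 k2 : nat) :
  0 < eps -> eps < 2^-1 ->
  (#|[set i | Xe i != X i]|%:R <= eps * n%:R) ->
  (Num.floor (eps * n%:R) <= (minn k1 k2)%:Z)%R ->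
  (k1 + k2 < n)%N ->
  let m := `|Num.floor (eps * n%:R)|%N in
  trimmed_mean (k1 - m) (k2 + m) X <= trimmed_mean k1 k2 Xe /\
  trimmed_mean k1 k2 Xe <= trimmed_mean (k1 + m) (k2 - m) X.
Proof.
move=> eps_gt0 _ card_le floor_le _ m.
have m_floor : m%:Z = Num.floor (eps * n%:R).
  by rewrite gez0_abs // floor_ge0 mulr_ge0 // ltW.
have card_diff : (#|[set i | Xe i != X i]| <= m)%N by rewrite -lez_nat m_floor floor_ge_int.
have card_diff_sym : (#|[set i | X i != Xe i]| <= m)%N.
  by under eq_finset => i do rewrite eq_sym.
have : (m <= minn k1 k2)%N by rewrite -lez_nat m_floor.
rewrite leq_min => /andP[m_le_k1 m_le_k2]; split.
- rewrite -{2}(subnK m_le_k1) -{2}(addnK m k2).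
  exact: trimmed_mean_le_shift (leq_addl _ _).
- exact: trimmed_mean_le_shift.
Qed.
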